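(* Fix nonnegative integers $\lambda_2\ge\mu_2\ge\nu_2$. For an integer $\lambda_1\ge\lambda_2$, let $N=\lambda_1+\lambda_2$ and consider the partitions $\lambda=(\lambda_1,\lambda_2)$, $\mu=(N-\mu_2,\mu_2)$, $\nu=(N-\nu_2,\nu_2)$ of $N$. Then $g_{\mu,\nu,\lambda}$ is independent of $\lambda_1$ for all $\lambda_1\ge\mu_2+\nu_2$, and this stable value equals $$p_S(\nu_2,\nu_2+\mu_2-\lambda_2)-p_S(\nu_2,\nu_2+\mu_2-\lambda_2-1)=\begin{cases}\lfloor \ell/2\rfloor+1&\text{if } \ell\ge0,\\ 0&\text{if }\ell<0,\end{cases}\qquad\text{where } \ell=\nu_2+\mu_2-\lambda_2 .$$
   Context: The Kronecker coefficient $g_{\mu,\nu,\lambda}$ (for $\ell(\mu),\ell(\nu)\le2$, $\ell(\lambda)\le4$, same weight, parts padded with zeros) is defined by $s_\lambda(x_1y_1,x_1y_2,x_2y_1,x_2y_2)=\sum_{\mu,\nu}g_{\mu,\nu,\lambda}\,s_\mu(x_1,x_2)s_\nu(y_1,y_2)$, with $s$ the Schur polynomials. For integers $n,m$, $p_S(n,m)$ is the number of $(x_1,\dots,x_4)\in\mathbb{Z}_{\ge0}^4$ with $x_1+x_3+x_4=n$, $x_2+x_3+2x_4=m$ (zero if $n<0$ or $m<0$). *)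

From HB Require Import structures.
From mathcomp Require Import all_boot all_order all_algebra.
Set Implicit Arguments. Unset Strict Implicit. Unset Printing Implicit Defensive.
Import Order.TTheory GRing.Theory Num.Theory.

(* A partition is a weakly decreasing seq nat (trailing zeros allowed).
   Cell (i,j) (0-based) belongs to the Young diagram of la iff j < la_i. *)
Definition incell (la : seq nat) (i j : nat) : bool := j < nth 0 la i.

(* Fillings of the rectangle 'I_(size la) x 'I_(head 0 la) (which contains the
   diagram of a partition la) with letters in 'I_n; cells outside the diagram
   are forced to hold 0 so that fillings of the diagram are counted once. *)
Definition filling (n : nat) (la : seq nat) :=
  {ffun 'I_(size la) * 'I_(head 0 la) -> 'I_n}.

Definition is_ssyt (n : nat) (la : seq nat) (t : filling n la) : bool :=
  [forall c : 'I_(size la) * 'I_(head 0 la), ~~ incell la c.1 c.2 ==> (val (t c) == 0)] &&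
  [forall c : 'I_(size la) * 'I_(head 0 la), [forall c' : 'I_(size la) * 'I_(head 0 la),
     (incell la c.1 c.2 && incell la c'.1 c'.2) ==>
       ((((val c.1 == val c'.1) && (val c.2 < val c'.2)) ==> (val (t c) <= val (t c'))) &&
        (((val c.2 == val c'.2) && (val c.1 < val c'.1)) ==> (val (t c) < val (t c'))))]].

Definition schur (R : comNzRingType) (n : nat) (la : seq nat) (z : 'I_n -> R) : R :=
  (\sum_(t : filling n la | is_ssyt t)
     \prod_(c : 'I_(size la) * 'I_(head 0 la) | incell la c.1 c.2) z (t c))%R.

Arguments schur {R} n la z.

Definition Rxy := {poly {poly {poly {poly int}}}}.
Definition x1 : Rxy := polyX _.
Definition x2 : Rxy := polyC (polyX _).
Definition y1 : Rxy := polyC (polyC (polyX _)).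
Definition y2 : Rxy := polyC (polyC (polyC (polyX _))).

Definition xs (i : 'I_2) : Rxy := nth 0%R [:: x1; x2] i.
Definition ys (i : 'I_2) : Rxy := nth 0%R [:: y1; y2] i.
Definition xys (i : 'I_4) : Rxy :=
  nth 0%R [:: (x1 * y1)%R; (x1 * y2)%R; (x2 * y1)%R; (x2 * y2)%R] i.

(* g is a family of Kronecker coefficients: for every partition la with at
   most 4 parts,
   s_la(x1y1,x1y2,x2y1,x2y2) = sum_{mu,nu} g mu nu la s_mu(x1,x2) s_nu(y1,y2),
   the sum being over the two-row partitions mu = (N-k,k), nu = (N-l,l) of
   N = |la|.  (Since the s_mu(x)s_nu(y) are linearly independent, this
   determines g mu nu la uniquely on these arguments.) *)
Definition kronecker_spec (g : seq nat -> seq nat -> seq nat -> int) : Prop :=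
  forall la : seq nat, size la <= 4 -> sorted geq la ->
    let N := sumn la in
    schur 4 la xys =
    (\sum_(k < N./2.+1) \sum_(l < N./2.+1)
       (g [:: (N - k)%N; nat_of_ord k] [:: (N - l)%N; nat_of_ord l] la)%:~R
         * (schur 2 [:: (N - k)%N; nat_of_ord k] xs
            * schur 2 [:: (N - l)%N; nat_of_ord l] ys))%R.

Definition pS_nat (n m : nat) : nat :=
  #|[set x : 'I_(n + m).+1 * 'I_(n + m).+1 * 'I_(n + m).+1 * 'I_(n + m).+1 |
     (x.1.1.1 + x.1.2 + x.2 == n) && (x.1.1.2 + x.1.2 + 2 * x.2 == m)]|.

Definition pS (n m : int) : nat :=
  match n, m with
  | Posz a, Posz b => pS_nat a b
  | _, _ => 0
  end.

From HB Require Import structures.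
From mathcomp Require Import all_boot all_order all_algebra.
From mathcomp Require Import zify ring.
Import Order.TTheory GRing.Theory Num.Theory.
Set Implicit Arguments. Unset Strict Implicit.

(* Expand s_lam(x1y1, x1y2, x2y1, x2y2) over the tableaux of shape (lam1, lam2) in four
   letters and each s_mu(x) s_nu(y) over tableaux in two letters.  Since s_(N-k,k)(x)
   contains x1^(N-a) x2^a exactly when k <= a <= N - k, the coefficient of
   x1^(N-a) x2^a y1^(N-b) y2^b on the right is the partial sum of g over mu2 <= a,
   nu2 <= b, so a mixed second difference in (a, b) isolates g(mu, nu, lam).  On the
   left the same difference counts the triples (p3, q1, q2) -- the multiplicities of
   the letter 3 in the first row and of 1, 2 in the second, the others being forced --
   with p3 + lam2 - q1 = mu2, p3 + lam2 - q2 = nu2 and q1 + q2 <= lam2.  Once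
   lam1 >= mu2 + nu2 nothing else constrains them, leaving floor(l/2) + 1 choices of
   p3 (none if l < 0) whatever lam1 is.  Finally p_S(n, m) - p_S(n, m - 1) counts the
   solutions of x3 + 2 x4 = m, which is the same number. *)

Lemma card_ord_ltn (n m : nat) : m <= n -> #|[set j : 'I_n | j < m]| = m.
Proof.
move=> le_mn; rewrite -sum1_card.
rewrite (eq_bigl (fun j : 'I_n => j < m)); last by move=> j; rewrite inE.
rewrite -(big_mkord (fun j => j < m) (fun _ => 1)).
rewrite (eq_bigl (fun i => predT i && (i < m))) //.
by rewrite -big_nat_widen // sum_nat_const_nat muln1 subn0.
Qed.

(* For [f] nondecreasing on the first [n'] positions, the positions below
   [n'] carrying a value [< v] form an initial segment. *)
Lemma card_below_leqE n n' (f : 'I_n -> nat) (j : 'I_n) v :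
  n' <= n -> j < n' ->
  (forall a b : 'I_n, a <= b -> b < n' -> f a <= f b) ->
  (#|[set a : 'I_n | (a < n') && (f a < v)]| <= j) = (v <= f j).
Proof.
move=> le_n'n lt_jn' f_mono; case: (leqP v (f j)) => le_v_fj.
- rewrite -(card_ord_ltn (ltnW (ltn_ord j))).
  apply: subset_leq_card; apply/subsetP => a; rewrite !inE => /andP[lt_an' lt_fav].
  rewrite ltnNge; apply/negP => le_ja.
  have := f_mono _ _ le_ja lt_an'; lia.
- apply/negbTE; rewrite -ltnNge.
  suff sub : [set a : 'I_n | a < j.+1] \subset [set a : 'I_n | (a < n') && (f a < v)].
    by have := subset_leq_card sub; rewrite card_ord_ltn.
  apply/subsetP => a; rewrite !inE => lt_aj.
  have -> /= : a < n' by lia.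
  have le_aj : a <= j by lia.
  have := f_mono _ _ le_aj lt_jn'; lia.
Qed.

Lemma ord2P (i : 'I_2) : i = ord0 \/ i = ord_max.
Proof. by case: i => [[|[|k]] lt_i2]; [left|right|by []]; apply: val_inj. Qed.

Lemma sum_pairE (R : nmodType) (I J : finType) (F : I * J -> R) :
  (\sum_(p : I * J) F p = \sum_(i : I) \sum_(j : J) F (i, j))%R.
Proof. by rewrite pair_bigA; apply: eq_bigr => -[i j]. Qed.

(** * Two-row semistandard tableaux *)

Definition entry n L1 L2 (t : filling n [:: L1; L2]) (i : 'I_2) (j : 'I_L1) : nat :=
  t (i, j).

Lemma two_row_ssytP n L1 L2 (t : filling n [:: L1; L2]) : is_ssyt t ->
  [/\ forall j : 'I_L1, L2 <= j -> entry t ord_max j = 0,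
      forall a b : 'I_L1, a <= b -> entry t ord0 a <= entry t ord0 b,
      forall a b : 'I_L1, a <= b -> b < L2 -> entry t ord_max a <= entry t ord_max b &
      forall j : 'I_L1, j < L2 -> entry t ord0 j < entry t ord_max j].
Proof.
rewrite /entry => /andP[/forallP out0 /forallP mono]; split.
- move=> j le_L2j; have := out0 (ord_max, j).
  by rewrite /incell /= ltnNge le_L2j => /eqP.
- move=> a b le_ab; have [lt_ab|le_ba] := ltnP a b; last first.
    by have -> : a = b by apply/val_inj/eqP; rewrite eqn_leq le_ab le_ba.
  have /forallP := mono (ord0, a) => /(_ (ord0, b)).
  by rewrite /incell /= (ltn_ord a) (ltn_ord b) /= lt_ab => /andP[].
- move=> a b le_ab lt_bL2; have [lt_ab|le_ba] := ltnP a b; last first.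
    by have -> : a = b by apply/val_inj/eqP; rewrite eqn_leq le_ab le_ba.
  have /forallP := mono (ord_max, a) => /(_ (ord_max, b)).
  by rewrite /incell /= lt_bL2 (leq_ltn_trans le_ab lt_bL2) /= lt_ab => /andP[].
- move=> j lt_jL2; have /forallP := mono (ord0, j) => /(_ (ord_max, j)).
  by rewrite /incell /= lt_jL2 (ltn_ord j) /= eqxx.
Qed.

Lemma prodr_piecewise4 (R : comNzRingType) (G : nat -> R) (b1 b2 b3 n : nat)
    (x0 x1 x2 x3 : R) :
  b1 <= b2 -> b2 <= b3 -> b3 <= n ->
  (forall j, j < b1 -> G j = x0) -> (forall j, b1 <= j < b2 -> G j = x1) ->
  (forall j, b2 <= j < b3 -> G j = x2) -> (forall j, b3 <= j < n -> G j = x3) ->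
  (\prod_(0 <= j < n) G j =
     x0 ^+ b1 * x1 ^+ (b2 - b1) * x2 ^+ (b3 - b2) * x3 ^+ (n - b3))%R.
Proof.
move=> le12 le23 le3n G0 G1 G2 G3.
rewrite (@big_cat_nat _ _ _ b3 0 n) // (@big_cat_nat _ _ _ b2 0 b3) //.
rewrite (@big_cat_nat _ _ _ b1 0 b2) //.
have -> : (\prod_(0 <= j < b1) G j = x0 ^+ b1)%R.
  by rewrite (eq_big_nat _ _ (F2 := fun _ => x0)) ?prodr_const_nat ?subn0 //
    => j /andP[_]; apply: G0.
have -> : (\prod_(b1 <= j < b2) G j = x1 ^+ (b2 - b1))%R.
  by rewrite (eq_big_nat _ _ (F2 := fun _ => x1)) ?prodr_const_nat.
have -> : (\prod_(b2 <= j < b3) G j = x2 ^+ (b3 - b2))%R.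
  by rewrite (eq_big_nat _ _ (F2 := fun _ => x2)) ?prodr_const_nat.
by rewrite (eq_big_nat _ _ (F2 := fun _ => x3)) ?prodr_const_nat.
Qed.

Section TwoLetters.
Variables M1 M2 : nat.

(* A tableau of shape (M1, M2) in the letters {0, 1} is determined by the
   number [z] of 0's in its first row. *)
Definition ssyt2_entry (z i j : nat) : nat :=
  if i == 0 then (z <= j : nat) else (j < M2 : nat).

Definition ssyt2_of (z : 'I_M1.+1) : filling 2 [:: M1; M2] :=
  [ffun c : 'I_2 * 'I_M1 => inord (ssyt2_entry z c.1 c.2)].

Lemma entry_ssyt2_of z i j : entry (ssyt2_of z) i j = ssyt2_entry z i j.
Proof. by rewrite /entry ffunE inordK // /ssyt2_entry; case: ifP => _; lia. Qed.

Definition ssyt2_zeros (t : filling 2 [:: M1; M2]) :=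
  #|[set j : 'I_M1 | (j < M1) && (entry t ord0 j < 1)]|.

Definition ssyt2_param (t : filling 2 [:: M1; M2]) : 'I_M1.+1 := inord (ssyt2_zeros t).

Lemma ssyt2_zeros_le t : ssyt2_zeros t <= M1.
Proof. by rewrite /ssyt2_zeros; apply: leq_trans (max_card _) _; rewrite card_ord. Qed.

Lemma ssyt2_paramK t : M2 <= M1 -> is_ssyt t -> ssyt2_of (ssyt2_param t) = t.
Proof.
move=> le_M21 t_ssyt; have [out1 mono0 _ col] := two_row_ssytP t_ssyt.
suff entryE : forall i j, entry (ssyt2_of (ssyt2_param t)) i j = entry t i j.
  by apply/ffunP => -[i j]; apply: val_inj; exact: entryE.
move=> i j; rewrite entry_ssyt2_of /ssyt2_param inordK; last by have := ssyt2_zeros_le t; lia.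
have lt_jM1 := ltn_ord j.
case: (ord2P i) => -> /=; rewrite /ssyt2_entry /=.
- have := @card_below_leqE M1 M1 (entry t ord0) j 1 (leqnn _) lt_jM1
    (fun a b h _ => mono0 a b h).
  have : entry t ord0 j < 2 by exact: ltn_ord.
  rewrite /ssyt2_zeros; lia.
- case: (ltnP j M2) => lt_jM2; last by rewrite out1 //; lia.
  have := col j lt_jM2; have : entry t ord_max j < 2 by exact: ltn_ord.
  lia.
Qed.

Lemma ssyt2_param_ge t : M2 <= M1 -> is_ssyt t -> M2 <= ssyt2_param t.
Proof.
move=> le_M21 t_ssyt; have [_ _ _ col] := two_row_ssytP t_ssyt.
rewrite /ssyt2_param inordK; last by have := ssyt2_zeros_le t; lia.
rewrite -[X in X <= _](card_ord_ltn le_M21).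
apply: subset_leq_card; apply/subsetP => j; rewrite !inE => lt_jM2.
rewrite (ltn_ord j) /=; have := col j lt_jM2.
have : entry t ord_max j < 2 by exact: ltn_ord.
lia.
Qed.

Lemma ssyt2_of_ssyt (z : 'I_M1.+1) : M2 <= M1 -> M2 <= z -> is_ssyt (ssyt2_of z).
Proof.
move=> le_M21 le_M2z; have lt_zM1 := ltn_ord z.
apply/andP; split.
- apply/forallP => -[i j].
  rewrite /incell -[val (ssyt2_of z (i, j))]/(entry _ i j) entry_ssyt2_of.
  have := ltn_ord j; case: (ord2P i) => -> /=; rewrite /ssyt2_entry /=; lia.
- apply/forallP => -[i j]; apply/forallP => -[i' j']; rewrite /incell.
  rewrite -[val (ssyt2_of z (i, j))]/(entry _ i j).
  rewrite -[val (ssyt2_of z (i', j'))]/(entry _ i' j').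
  rewrite !entry_ssyt2_of; have := ltn_ord j; have := ltn_ord j'.
  by case: (ord2P i) => ->; case: (ord2P i') => -> /=; rewrite /ssyt2_entry /=; lia.
Qed.

Lemma ssyt2_ofK (z : 'I_M1.+1) : M2 <= M1 -> M2 <= z -> ssyt2_param (ssyt2_of z) = z.
Proof.
move=> le_M21 le_M2z; have lt_zM1 := ltn_ord z.
have zerosE : ssyt2_zeros (ssyt2_of z) = z.
  rewrite -[RHS](card_ord_ltn (m := z) (n := M1)); last by lia.
  apply: eq_card => j; rewrite !inE entry_ssyt2_of /ssyt2_entry /= (ltn_ord j); lia.
by apply: val_inj => /=; rewrite /ssyt2_param zerosE inordK.
Qed.

Lemma prod_ssyt2_of (R : comNzRingType) (x : 'I_2 -> R) (z : 'I_M1.+1) :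
  M2 <= M1 -> M2 <= z ->
  (\prod_(c : 'I_2 * 'I_M1 | incell [:: M1; M2] c.1 c.2) x (ssyt2_of z c) =
   x (inord 0) ^+ z * x (inord 1) ^+ (M1 - z + M2))%R.
Proof.
move=> le_M21 le_M2z; have lt_zM1 := ltn_ord z.
set G := fun (i : 'I_2) (j : 'I_M1) => x (inord (ssyt2_entry z i j)).
rewrite (eq_bigr (fun c => G c.1 c.2)); last by move=> c _; rewrite ffunE.
rewrite -(pair_big_dep xpredT (fun (i : 'I_2) (j : 'I_M1) => incell [:: M1; M2] i j) G).
rewrite big_ord_recl big_ord_recl big_ord0 Monoid.mulm1 /G /incell /=.
rewrite -(big_mkord (fun j => j < M1) (fun j => x (inord (ssyt2_entry z 0 j)))).
rewrite -(big_mkord (fun j => j < M2) (fun j => x (inord (ssyt2_entry z 1 j)))).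
rewrite -(big_nat_widen 0 M1 M1 xpredT) // -(big_nat_widen 0 M2 M1 xpredT) //.
rewrite (@prodr_piecewise4 R _ z M1 M1 M1
   (x (inord 0)) (x (inord 1)) (x (inord 1)) (x (inord 1))); try lia;
  try (move=> j lt_j; congr (x (inord _)); rewrite /ssyt2_entry /=; lia).
rewrite (@prodr_piecewise4 R _ 0 M2 M2 M2
   (x (inord 0)) (x (inord 1)) (x (inord 1)) (x (inord 1))); try lia;
  try (move=> j lt_j; congr (x (inord _)); rewrite /ssyt2_entry /=; lia).
rewrite !subnn subn0 !expr0 !mulr1 mul1r exprD.
by move: (x (inord 0) ^+ z)%R (x (inord 1) ^+ (M1 - z))%R (x (inord 1) ^+ M2)%R => A B C; ring.
Qed.

Lemma schur2_two_row (R : comNzRingType) (x : 'I_2 -> R) : M2 <= M1 ->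
  schur 2 [:: M1; M2] x =
  (\sum_(z < M1.+1 | (M2 <= z)%N) x (inord 0) ^+ z * x (inord 1) ^+ (M1 - z + M2))%R.
Proof.
move=> le_M21; rewrite /schur (reindex_onto ssyt2_of ssyt2_param); last first.
  by move=> t t_ssyt; apply: ssyt2_paramK.
apply: eq_big => z.
- apply/idP/idP.
  + by case/andP => t_ssyt /eqP <-; exact: ssyt2_param_ge.
  + by move=> le_M2z; rewrite ssyt2_of_ssyt // ssyt2_ofK // eqxx.
- case/andP => t_ssyt /eqP zE.
  by apply: prod_ssyt2_of; rewrite // -zE; exact: ssyt2_param_ge.
Qed.

End TwoLetters.

Section FourLetters.
Variables L1 L2 : nat.

(* A tableau of shape (L1, L2) in the letters {0, .., 3} is encoded by the
   multiplicities p1, p2, p3 of 1, 2, 3 in its first row and q1, q2 of 1, 2 in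
   its second row; the second row contains no 0, and the remaining cells hold
   0 (first row) or 3 (second row). *)
Definition ssyt4_entry (p1 p2 p3 q1 q2 i j : nat) : nat :=
  if i == 0 then (L1 - (p1 + p2 + p3) <= j) + (L1 - (p2 + p3) <= j) + (L1 - p3 <= j)
  else if j < L2 then (1 + (q1 <= j) + (q1 + q2 <= j))%N else 0.

Definition ssyt4_admissible (p1 p2 p3 q1 q2 : nat) : bool :=
  [&& p1 + p2 + p3 <= L1, q1 + q2 <= L2, q1 <= L1 - (p1 + p2 + p3),
      q1 + q2 <= L1 - (p2 + p3) & L2 <= L1 - p3].

Definition ssyt4_weight (R : comNzRingType) (x : 'I_4 -> R) (p1 p2 p3 q1 q2 : nat) : R :=
  (x (inord 0) ^+ (L1 - (p1 + p2 + p3)) * x (inord 1) ^+ (p1 + q1) * x (inord 2) ^+ (p2 + q2)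
   * x (inord 3) ^+ (p3 + (L2 - (q1 + q2))))%R.

(* Ordered as (p3, q1, q2, p1, p2), so that p1 and p2, which are pinned down by the
   coefficient extraction below, are summed innermost in [schur4_two_row]. *)
Local Notation param4 := ('I_L1.+1 * 'I_L1.+1 * 'I_L1.+1 * 'I_L1.+1 * 'I_L1.+1)%type.

Definition ssyt4_of (p1 p2 p3 q1 q2 : nat) : filling 4 [:: L1; L2] :=
  [ffun c : 'I_2 * 'I_L1 => inord (ssyt4_entry p1 p2 p3 q1 q2 c.1 c.2)].

Definition of_param4 (d : param4) := ssyt4_of d.1.2 d.2 d.1.1.1.1 d.1.1.1.2 d.1.1.2.

Definition admissible4 (d : param4) :=
  ssyt4_admissible d.1.2 d.2 d.1.1.1.1 d.1.1.1.2 d.1.1.2.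

Lemma entry_ssyt4_of p1 p2 p3 q1 q2 i j :
  entry (ssyt4_of p1 p2 p3 q1 q2) i j = ssyt4_entry p1 p2 p3 q1 q2 i j.
Proof. by rewrite /entry ffunE inordK // /ssyt4_entry; case: ifP => _; [|case: ifP => _]; lia. Qed.

Lemma ssyt4_of_ssyt p1 p2 p3 q1 q2 : L2 <= L1 -> ssyt4_admissible p1 p2 p3 q1 q2 ->
  is_ssyt (ssyt4_of p1 p2 p3 q1 q2).
Proof.
rewrite /ssyt4_admissible => le_L21 adm; apply/andP; split.
- apply/forallP => -[i j].
  rewrite /incell -[val (ssyt4_of _ _ _ _ _ (i, j))]/(entry _ i j) entry_ssyt4_of.
  have := ltn_ord j; rewrite /ssyt4_entry.
  by case: (ord2P i) => -> /=; repeat case: ifP => /=; lia.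
- apply/forallP => -[i j]; apply/forallP => -[i' j']; rewrite /incell.
  rewrite -[val (ssyt4_of _ _ _ _ _ (i, j))]/(entry _ i j).
  rewrite -[val (ssyt4_of _ _ _ _ _ (i', j'))]/(entry _ i' j').
  rewrite !entry_ssyt4_of; have := ltn_ord j; have := ltn_ord j'; rewrite /ssyt4_entry.
  by case: (ord2P i) => ->; case: (ord2P i') => -> /=; repeat case: ifP => /=; lia.
Qed.

Definition below0 (t : filling 4 [:: L1; L2]) v :=
  #|[set j : 'I_L1 | (j < L1) && (entry t ord0 j < v)]|.
Definition below1 (t : filling 4 [:: L1; L2]) v :=
  #|[set j : 'I_L1 | (j < L2) && (entry t ord_max j < v)]|.

Lemma below0_le t v : below0 t v <= L1.
Proof. by rewrite /below0; apply: leq_trans (max_card _) _; rewrite card_ord. Qed.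

Lemma below1_le t v : L2 <= L1 -> below1 t v <= L2.
Proof.
move=> le_L21; rewrite /below1 -[X in _ <= X](card_ord_ltn le_L21).
by apply: subset_leq_card; apply/subsetP => j; rewrite !inE => /andP[].
Qed.

Lemma below0_mono t v w : v <= w -> below0 t v <= below0 t w.
Proof.
move=> le_vw; apply: subset_leq_card; apply/subsetP => j; rewrite !inE.
by case/andP => -> /= lt_v; exact: leq_trans lt_v le_vw.
Qed.

Lemma below1_mono t v w : v <= w -> below1 t v <= below1 t w.
Proof.
move=> le_vw; apply: subset_leq_card; apply/subsetP => j; rewrite !inE.
by case/andP => -> /= lt_v; exact: leq_trans lt_v le_vw.
Qed.

Definition ssyt4_param (t : filling 4 [:: L1; L2]) : param4 :=
  (inord (L1 - below0 t 3), inord (below1 t 2), inord (below1 t 3 - below1 t 2),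
   inord (below0 t 2 - below0 t 1), inord (below0 t 3 - below0 t 2)).

Lemma ssyt4_paramK t : L2 <= L1 -> is_ssyt t -> of_param4 (ssyt4_param t) = t.
Proof.
move=> le_L21 t_ssyt; have [out1 mono0 mono1 col] := two_row_ssytP t_ssyt.
have := below0_mono t (leqnSn 1); have := below0_mono t (leqnSn 2).
have := below0_le t 3; have := below1_mono t (leqnSn 2); have := below1_le t 3 le_L21.
move=> ? ? ? ? ?.
suff entryE : forall i j, entry (of_param4 (ssyt4_param t)) i j = entry t i j.
  by apply/ffunP => -[i j]; apply: val_inj; exact: entryE.
move=> i j; rewrite /of_param4 entry_ssyt4_of /= !inordK; try lia.
have lt_jL1 := ltn_ord j.
case: (ord2P i) => -> /=; rewrite /ssyt4_entry /=.
- have below0E v : (below0 t v <= j) = (v <= entry t ord0 j).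
    exact: @card_below_leqE L1 L1 (entry t ord0) j v (leqnn _) lt_jL1
      (fun a b h _ => mono0 a b h).
  have := below0E 1; have := below0E 2; have := below0E 3.
  have : entry t ord0 j < 4 by exact: ltn_ord.
  lia.
- case: ifP => lt_jL2; last by rewrite out1 // leqNgt lt_jL2.
  have below1E v : (below1 t v <= j) = (v <= entry t ord_max j).
    exact: @card_below_leqE L1 L2 (entry t ord_max) j v le_L21 lt_jL2 mono1.
  have := below1E 2; have := below1E 3; have := col j lt_jL2.
  have : entry t ord_max j < 4 by exact: ltn_ord.
  lia.
Qed.

Lemma ssyt4_param_admissible t : L2 <= L1 -> is_ssyt t -> admissible4 (ssyt4_param t).
Proof.
move=> le_L21 t_ssyt; have [_ _ _ col] := two_row_ssytP t_ssyt.
have := below0_mono t (leqnSn 1); have := below0_mono t (leqnSn 2).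
have := below0_le t 3; have := below1_mono t (leqnSn 2); have := below1_le t 3 le_L21.
have below_col v : below1 t v <= below0 t v.-1.
  apply: subset_leq_card; apply/subsetP => j; rewrite !inE => /andP[lt_jL2 lt_v].
  by rewrite (ltn_ord j) /=; have := col j lt_jL2; lia.
have := below_col 2; have := below_col 3.
have : L2 <= below0 t 3.
  rewrite -[X in X <= _](card_ord_ltn le_L21).
  apply: subset_leq_card; apply/subsetP => j; rewrite !inE => lt_jL2.
  rewrite (ltn_ord j) /=; have := col j lt_jL2.
  have : entry t ord_max j < 4 by exact: ltn_ord.
  lia.
rewrite /admissible4 /= /ssyt4_admissible; move=> *; rewrite !inordK; lia.
Qed.

Lemma ssyt4_ofK (p1 p2 p3 q1 q2 : 'I_L1.+1) : L2 <= L1 ->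
  ssyt4_admissible p1 p2 p3 q1 q2 -> ssyt4_param (ssyt4_of p1 p2 p3 q1 q2) = (p3, q1, q2, p1, p2).
Proof.
rewrite /ssyt4_admissible => le_L21 adm.
have := ltn_ord p1; have := ltn_ord p2; have := ltn_ord p3.
have := ltn_ord q1; have := ltn_ord q2; move=> ? ? ? ? ?.
set t := ssyt4_of _ _ _ _ _.
have below0E v m : m <= L1 ->
    (forall j : 'I_L1, (ssyt4_entry p1 p2 p3 q1 q2 0 j < v) = (j < m)) -> below0 t v = m.
  move=> le_mL1 E; rewrite /below0 -[RHS](card_ord_ltn le_mL1); apply: eq_card => j.
  by rewrite !inE entry_ssyt4_of (ltn_ord j) E.
have below1E v m : m <= L1 ->
    (forall j : 'I_L1, (j < L2) && (ssyt4_entry p1 p2 p3 q1 q2 1 j < v) = (j < m)) ->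
    below1 t v = m.
  move=> le_mL1 E; rewrite /below1 -[RHS](card_ord_ltn le_mL1); apply: eq_card => j.
  by rewrite !inE entry_ssyt4_of E.
rewrite /ssyt4_param.
rewrite (below0E 1 (L1 - (p1 + p2 + p3))); [|lia| move=> j; rewrite /ssyt4_entry /=; lia].
rewrite (below0E 2 (L1 - (p2 + p3))); [|lia| move=> j; rewrite /ssyt4_entry /=; lia].
rewrite (below0E 3 (L1 - p3)); [|lia| move=> j; rewrite /ssyt4_entry /=; lia].
rewrite (below1E 2 q1); [|lia| move=> j; rewrite /ssyt4_entry /=; case: ifP; lia].
rewrite (below1E 3 (q1 + q2)); [|lia| move=> j; rewrite /ssyt4_entry /=; case: ifP; lia].
by congr (_, _, _, _, _); apply: val_inj; rewrite /= inordK; lia.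
Qed.

Lemma prod_ssyt4_of (R : comNzRingType) (x : 'I_4 -> R) p1 p2 p3 q1 q2 :
  L2 <= L1 -> ssyt4_admissible p1 p2 p3 q1 q2 ->
  (\prod_(c : 'I_2 * 'I_L1 | incell [:: L1; L2] c.1 c.2) x (ssyt4_of p1 p2 p3 q1 q2 c) =
   ssyt4_weight x p1 p2 p3 q1 q2)%R.
Proof.
rewrite /ssyt4_admissible => le_L21 adm.
set G := fun (i : 'I_2) (j : 'I_L1) => x (inord (ssyt4_entry p1 p2 p3 q1 q2 i j)).
rewrite (eq_bigr (fun c => G c.1 c.2)); last by move=> c _; rewrite ffunE.
rewrite -(pair_big_dep xpredT (fun (i : 'I_2) (j : 'I_L1) => incell [:: L1; L2] i j) G).
rewrite big_ord_recl big_ord_recl big_ord0 Monoid.mulm1 /G /incell /=.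
rewrite -(big_mkord (fun j => j < L1) (fun j => x (inord (ssyt4_entry p1 p2 p3 q1 q2 0 j)))).
rewrite -(big_mkord (fun j => j < L2) (fun j => x (inord (ssyt4_entry p1 p2 p3 q1 q2 1 j)))).
rewrite -(big_nat_widen 0 L1 L1 xpredT) // -(big_nat_widen 0 L2 L1 xpredT) //.
rewrite (@prodr_piecewise4 R _ (L1 - (p1 + p2 + p3)) (L1 - (p2 + p3)) (L1 - p3) L1
   (x (inord 0)) (x (inord 1)) (x (inord 2)) (x (inord 3))); try lia;
  try (move=> j lt_j; congr (x (inord _)); rewrite /ssyt4_entry /=; lia).
rewrite (@prodr_piecewise4 R _ 0 q1 (q1 + q2) L2
   (x (inord 0)) (x (inord 1)) (x (inord 2)) (x (inord 3))); try lia;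
  try (move=> j lt_j; congr (x (inord _)); rewrite /ssyt4_entry /=; case: ifP; lia).
rewrite /ssyt4_weight.
have -> : L1 - (p2 + p3) - (L1 - (p1 + p2 + p3)) = p1 by lia.
have -> : L1 - p3 - (L1 - (p2 + p3)) = p2 by lia.
have -> : L1 - (L1 - p3) = p3 by lia.
have -> : q1 + q2 - q1 = q2 by lia.
rewrite subn0 expr0 !exprD.
move: (x (inord 0) ^+ _)%R (x (inord 1) ^+ p1)%R (x (inord 1) ^+ q1)%R (x (inord 2) ^+ p2)%R
  (x (inord 2) ^+ q2)%R (x (inord 3) ^+ p3)%R (x (inord 3) ^+ (L2 - (q1 + q2)))%R.
by move=> A B C D E F H; ring.
Qed.

Lemma schur4_two_row (R : comNzRingType) (x : 'I_4 -> R) : L2 <= L1 ->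
  schur 4 [:: L1; L2] x =
  (\sum_(p3 < L1.+1) \sum_(q1 < L1.+1) \sum_(q2 < L1.+1) \sum_(p1 < L1.+1) \sum_(p2 < L1.+1)
     if ssyt4_admissible p1 p2 p3 q1 q2 then ssyt4_weight x p1 p2 p3 q1 q2 else 0)%R.
Proof.
move=> le_L21.
have ssyt_param4 d : is_ssyt (of_param4 d) && (ssyt4_param (of_param4 d) == d) = admissible4 d.
  case: d => [[[[p3 q1] q2] p1] p2]; rewrite /of_param4 /admissible4 /=.
  apply/idP/idP => [/andP[t_ssyt /eqP dE] | adm].
  - by have := ssyt4_param_admissible le_L21 t_ssyt; rewrite dE.
  - by rewrite ssyt4_of_ssyt // ssyt4_ofK // eqxx.
rewrite /schur (reindex_onto of_param4 ssyt4_param); last first.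
  by move=> t t_ssyt; apply: ssyt4_paramK.
rewrite (eq_big admissible4 (fun d => ssyt4_weight x d.1.2 d.2 d.1.1.1.1 d.1.1.1.2 d.1.1.2));
  [|exact: ssyt_param4|].
- by rewrite big_mkcond !sum_pairE.
- by move=> d; rewrite ssyt_param4 => adm; apply: prod_ssyt4_of.
Qed.

End FourLetters.

Local Open Scope ring_scope.

Lemma sum_ord_indicator (B X : nat) (P : pred nat) :
  \sum_(i < B | P i) (i == X :> nat)%:R = ((X < B)%N && P X)%:R :> int.
Proof.
case: (ltnP X B) => [lt_XB | le_BX] /=; last first.
  by apply: big1 => i _; case: eqP => // iX; have := ltn_ord i; lia.
case PX: (P X).
- rewrite (bigD1 (Ordinal lt_XB)) ?PX //= eqxx big1 ?addr0 // => i /andP[_ ne_iX].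
  by rewrite (negbTE (ne_iX : i != X :> nat)).
- by apply: big1 => i Pi; case: eqP => // iX; move: Pi; rewrite iX PX.
Qed.

Lemma sum_ord_eq_andb (B X : nat) (b : bool) :
  \sum_(i < B) ((i == X :> nat) && b)%:R = ((X < B)%N && b)%:R :> int.
Proof.
case: b; last by rewrite andbF big1 // => i _; rewrite andbF.
rewrite andbT (eq_bigr (fun i : 'I_B => (i == X :> nat)%:R)) => [|i _]; last by rewrite andbT.
by rewrite (sum_ord_indicator B X xpredT) andbT.
Qed.

Lemma sum_ord_ltn (B c : nat) : (c <= B)%N -> \sum_(i < B) ((i < c)%N%:R : int) = c%:R.
Proof.
move=> le_cB; rewrite -(big_mkord xpredT (fun i => ((i < c)%N%:R : int))).
rewrite (eq_bigr (fun i => if (i < c)%N then 1 else 0)); last by move=> i _; case: (i < c)%N.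
by rewrite -big_mkcond /= -(big_nat_widen 0 c B xpredT) // sumr_const_nat subn0.
Qed.

Lemma sum_ord_shrink (C M : nat) (F : nat -> int) : (M <= C)%N ->
  (forall i, (M <= i)%N -> F i = 0) -> \sum_(i < C) F i = \sum_(i < M) F i.
Proof.
move=> le_MC F0; rewrite (big_ord_widen C F le_MC) [RHS]big_mkcond /=.
by apply: eq_bigr => i _; case: ifP => // lt_iM; rewrite F0 //; lia.
Qed.

Lemma sum_indicator2 n (F : 'I_n -> 'I_n -> int) (a b : 'I_n) :
  \sum_(k < n) \sum_(l < n) F k l * ((k == a :> nat) && (l == b :> nat))%:R = F a b.
Proof.
rewrite (bigD1 a) //= [X in _ + X]big1 ?addr0 => [|k k_a]; last first.
  by apply: big1 => l _; rewrite (negbTE (k_a : k != a :> nat)) mulr0.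
rewrite (bigD1 b) //= !eqxx mulr1 big1 ?addr0 // => l l_b.
by rewrite (negbTE (l_b : l != b :> nat)) andbF mulr0.
Qed.

Definition mixed_diff (C : nat -> nat -> int) (a b : nat) : int :=
  C a.+1 b.+1 - C a b.+1 - C a.+1 b + C a b.

Lemma eq_mixed_diff (C D : nat -> nat -> int) a b :
  (forall K L, (K <= a.+1)%N -> (L <= b.+1)%N -> C K L = D K L) ->
  mixed_diff C a b = mixed_diff D a b.
Proof. by move=> CD; rewrite /mixed_diff !CD. Qed.

Lemma mixed_diff_sum (I : Type) (r : seq I) (P : pred I) (G : I -> nat -> nat -> int) a b :
  mixed_diff (fun K L => \sum_(i <- r | P i) G i K L) a b =
  \sum_(i <- r | P i) mixed_diff (G i) a b.
Proof. by rewrite /mixed_diff -!sumrB -big_split. Qed.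

Lemma mixed_diff_indicator (c : int) (x y a b : nat) :
  mixed_diff (fun K L => c * ((x < K) && (y < L))%N%:R) a b = c * ((x == a) && (y == b))%:R.
Proof. by rewrite /mixed_diff -!mulrBr -mulrDr !natz; congr (_ * _); lia. Qed.

(** * Coefficient extraction *)

Definition monom (i j m n : nat) : Rxy := x1 ^+ i * x2 ^+ j * y1 ^+ m * y2 ^+ n.

Definition coef4 (p : Rxy) (a b c d : nat) : int := p`_a`_b`_c`_d.

(* The coefficient of x1^(N+1-K) x2^(K-1) y1^(N+1-L) y2^(L-1), in a form that
   stays meaningful (and vanishes in degree N) for K = 0 or L = 0. *)
Definition coef_at (p : Rxy) (N K L : nat) : int :=
  coef4 p (N.+1 - K) (N - (N.+1 - K)) (N.+1 - L) (N - (N.+1 - L)).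

Lemma coefXnMC (R : comNzRingType) (Q : R) (i a : nat) :
  ('X^i * Q%:P)`_a = if a == i then Q else 0.
Proof. by rewrite mulrC coefCM coefXn; case: eqP => _; rewrite ?mulr1 ?mulr0. Qed.

Lemma coef4_monom i j m n a b c d :
  coef4 (monom i j m n) a b c d = ((a == i) && (b == j) && (c == m) && (d == n))%:R.
Proof.
have -> : monom i j m n = 'X^i * ('X^j * ('X^m * ('X^n)%:P)%:P)%:P.
  by rewrite /monom /x1 /x2 /y1 /y2 !polyCM !polyC_exp -!mulrA.
rewrite /coef4 coefXnMC; case: (a == i) => /=; last by rewrite !coef0.
rewrite coefXnMC; case: (b == j) => /=; last by rewrite !coef0.
rewrite coefXnMC; case: (c == m) => /=; last by rewrite !coef0.
by rewrite coefXn.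
Qed.

Lemma coef4_sum (I : Type) (r : seq I) (P : pred I) (F : I -> Rxy) a b c d :
  coef4 (\sum_(i <- r | P i) F i) a b c d = \sum_(i <- r | P i) coef4 (F i) a b c d.
Proof. by rewrite /coef4 !coef_sum. Qed.

Lemma coef4_zM (z : int) p a b c d : coef4 (z%:~R * p) a b c d = z * coef4 p a b c d.
Proof. by rewrite /coef4 mulrzl !coefMrz mulrzz mulrC. Qed.

Lemma coef_at_schur2 (N k l K L : nat) :
  (k <= N./2)%N -> (l <= N./2)%N -> (K <= N./2.+1)%N -> (L <= N./2.+1)%N ->
  coef_at (schur 2 [:: N - k; k]%N xs * schur 2 [:: N - l; l]%N ys) N K L =
  ((k < K) && (l < L))%N%:R.
Proof.
move=> le_k le_l le_K le_L.
have le_half : (2 * N./2 <= N)%N.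
  by rewrite mul2n -[X in (_ <= X)%N](odd_double_half N) leq_addl.
rewrite !schur2_two_row; try lia.
have [-> ->] : xs (inord 0) = x1 /\ xs (inord 1) = x2 by rewrite /xs !inordK.
have [-> ->] : ys (inord 0) = y1 /\ ys (inord 1) = y2 by rewrite /ys !inordK.
have termE (i m : nat) : (i <= N - k)%N -> (m <= N - l)%N ->
    coef4 (x1 ^+ i * x2 ^+ (N - k - i + k)%N * (y1 ^+ m * y2 ^+ (N - l - m + l)%N))
      (N.+1 - K) (N - (N.+1 - K)) (N.+1 - L) (N - (N.+1 - L)) =
    (i == N.+1 - K)%N%:R * (m == N.+1 - L)%N%:R.
  move=> le_i le_m; rewrite mulrA -/(monom _ _ _ _) coef4_monom -natrM mulnb.
  congr (_%:R); rewrite [i == _]eq_sym [m == _]eq_sym.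
  case: (N.+1 - K =P i)%N => [iE|] //=; case: (N.+1 - L =P m)%N => [mE|] /=; last by rewrite andbF.
  have -> : (N - (N.+1 - K) == N - k - i + k)%N by apply/eqP; lia.
  by have -> : (N - (N.+1 - L) == N - l - m + l)%N by apply/eqP; lia.
rewrite /coef_at big_distrl coef4_sum.
under eq_bigr => i _ do rewrite big_distrr coef4_sum.
under eq_bigr => i _ do under eq_bigr => m _ do rewrite (termE _ _ (ltn_ord i) (ltn_ord m)).
by rewrite -big_distrlr /= !sum_ord_indicator -natrM mulnb; congr (_%:R); lia.
Qed.

Lemma coef_at_rhs (N : nat) (F : 'I_(N./2.+1) -> 'I_(N./2.+1) -> int) K L :
  (K <= N./2.+1)%N -> (L <= N./2.+1)%N ->
  coef_at (\sum_(k < N./2.+1) \sum_(l < N./2.+1)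
      (F k l)%:~R * (schur 2 [:: N - k; nat_of_ord k]%N xs * schur 2 [:: N - l; nat_of_ord l]%N ys))
    N K L =
  \sum_(k < N./2.+1) \sum_(l < N./2.+1) F k l * ((k < K) && (l < L))%N%:R.
Proof.
move=> le_K le_L; rewrite /coef_at coef4_sum; apply: eq_bigr => k _.
rewrite coef4_sum; apply: eq_bigr => l _.
by rewrite coef4_zM; congr (_ * _); exact: (coef_at_schur2 (ltn_ord k) (ltn_ord l)).
Qed.

Lemma mixed_diff_rhs (N : nat) (F : 'I_(N./2.+1) -> 'I_(N./2.+1) -> int) (a b : 'I_(N./2.+1)) :
  mixed_diff (coef_at (\sum_(k < N./2.+1) \sum_(l < N./2.+1)
      (F k l)%:~R * (schur 2 [:: N - k; nat_of_ord k]%N xs * schur 2 [:: N - l; nat_of_ord l]%N ys))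
    N) a b = F a b.
Proof.
rewrite (@eq_mixed_diff _ (fun K L =>
  \sum_(k < N./2.+1) \sum_(l < N./2.+1) F k l * ((k < K) && (l < L))%N%:R)); last first.
  move=> K L le_K le_L.
  by apply: coef_at_rhs; [exact: leq_trans le_K (ltn_ord a) | exact: leq_trans le_L (ltn_ord b)].
rewrite mixed_diff_sum; under eq_bigr => k _ do rewrite mixed_diff_sum.
under eq_bigr => k _ do under eq_bigr => l _ do rewrite mixed_diff_indicator.
exact: sum_indicator2.
Qed.

Lemma monomial_pairwise_products (R : comNzRingType) (a b c d : R) e0 e1 e2 e3 :
  (a * c) ^+ e0 * (a * d) ^+ e1 * (b * c) ^+ e2 * (b * d) ^+ e3 =
  a ^+ (e0 + e1) * b ^+ (e2 + e3) * c ^+ (e0 + e2) * d ^+ (e1 + e3).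
Proof.
rewrite !exprMn !exprD.
move: (a ^+ e0) (a ^+ e1) (b ^+ e2) (b ^+ e3) (c ^+ e0) (c ^+ e2) (d ^+ e1) (d ^+ e3).
by move=> A B C D E F G H; ring.
Qed.

Lemma ssyt4_weight_xys L1 L2 p1 p2 p3 q1 q2 :
  ssyt4_weight L1 L2 xys p1 p2 p3 q1 q2 =
  monom (L1 - (p1 + p2 + p3) + (p1 + q1)) (p2 + q2 + (p3 + (L2 - (q1 + q2))))
        (L1 - (p1 + p2 + p3) + (p2 + q2)) (p1 + q1 + (p3 + (L2 - (q1 + q2)))).
Proof.
rewrite /ssyt4_weight /monom /xys !inordK //=.
exact: monomial_pairwise_products.
Qed.

(* A tableau with parameters (p1, p2, p3, q1, q2) contributes to [coef_at _ (L1 + L2) K L]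
   iff p2 and p1 take the values forced by the x2- and y2-degrees K - 1 and L - 1. *)
Lemma ssyt4_exponentE (L1 L2 K L p1 p2 p3 q1 q2 : nat) : (L2 <= L1)%N -> (K + L <= L1 + 2)%N ->
  ssyt4_admissible L1 L2 p1 p2 p3 q1 q2 &&
    ((((L1 + L2).+1 - K == L1 - (p1 + p2 + p3) + (p1 + q1)) &&
      ((L1 + L2) - ((L1 + L2).+1 - K) == p2 + q2 + (p3 + (L2 - (q1 + q2)))) &&
      ((L1 + L2).+1 - L == L1 - (p1 + p2 + p3) + (p2 + q2))) &&
      ((L1 + L2) - ((L1 + L2).+1 - L) == p1 + q1 + (p3 + (L2 - (q1 + q2)))))%N
  = ((p2 == K - 1 - (p3 + (L2 - q1))) && ((p1 == L - 1 - (p3 + (L2 - q2))) &&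
      [&& q1 + q2 <= L2, p3 + (L2 - q1) < K & p3 + (L2 - q2) < L]))%N.
Proof.
move=> le_L21 le_KL; rewrite /ssyt4_admissible; apply/idP/idP.
- case/andP => /and5P[? ? ? ? ?] /andP[/andP[/andP[/eqP ? /eqP ?] /eqP ?] /eqP ?].
  by apply/andP; split; [|apply/andP; split; [|apply/and3P; split]]; try apply/eqP; lia.
- case/andP => /eqP ? /andP[/eqP ? /and3P[? ? ?]].
  apply/andP; split; [apply/and5P; split | apply/andP; split; [apply/andP; split;
   [apply/andP; split|]|]]; try apply/eqP; lia.
Qed.

Lemma coef_at_lhs L1 L2 K L : (L2 <= L1)%N -> (K + L <= L1 + 2)%N ->
  coef_at (schur 4 [:: L1; L2] xys) (L1 + L2) K L =
  \sum_(p3 < L1.+1) \sum_(q1 < L1.+1) \sum_(q2 < L1.+1)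
     (q1 + q2 <= L2)%N%:R * ((p3 + (L2 - q1) < K) && (p3 + (L2 - q2) < L))%N%:R.
Proof.
move=> le_L21 le_KL; rewrite /coef_at schur4_two_row // coef4_sum.
apply: eq_bigr => p3 _; rewrite coef4_sum; apply: eq_bigr => q1 _.
rewrite coef4_sum; apply: eq_bigr => q2 _; rewrite coef4_sum.
have termE (p1 p2 : nat) :
    coef4 (if ssyt4_admissible L1 L2 p1 p2 p3 q1 q2 then ssyt4_weight L1 L2 xys p1 p2 p3 q1 q2
           else 0)
      ((L1 + L2).+1 - K) (L1 + L2 - ((L1 + L2).+1 - K))
      ((L1 + L2).+1 - L) (L1 + L2 - ((L1 + L2).+1 - L)) =
    ((p2 == K - 1 - (p3 + (L2 - q1))) && ((p1 == L - 1 - (p3 + (L2 - q2))) &&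
      [&& q1 + q2 <= L2, p3 + (L2 - q1) < K & p3 + (L2 - q2) < L]))%N%:R.
  rewrite -(@ssyt4_exponentE L1 L2 K L p1 p2 p3 q1 q2) //; case: ssyt4_admissible => /=.
  - by rewrite ssyt4_weight_xys coef4_monom.
  - by rewrite /coef4 !coef0.
under eq_bigr => p1 _ do rewrite coef4_sum.
under eq_bigr => p1 _ do under eq_bigr => p2 _ do rewrite termE.
under eq_bigr => p1 _ do rewrite sum_ord_eq_andb andbCA.
rewrite sum_ord_eq_andb -natrM mulnb; congr (_%:R).
by case: (q1 + q2 <= L2)%N; case: (p3 + (L2 - q1) < K)%N / leqP;
  case: (p3 + (L2 - q2) < L)%N / leqP => //=; lia.
Qed.

Lemma mixed_diff_schur4_xys L1 L2 K0 L0 : (L2 <= L1)%N -> (K0 + L0 <= L1)%N ->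
  mixed_diff (coef_at (schur 4 [:: L1; L2] xys) (L1 + L2)) K0 L0 =
  \sum_(p3 < L1.+1) \sum_(q1 < L1.+1) \sum_(q2 < L1.+1)
     (q1 + q2 <= L2)%N%:R * ((p3 + (L2 - q1) == K0) && (p3 + (L2 - q2) == L0))%N%:R.
Proof.
move=> le_L21 le_KL0.
rewrite (@eq_mixed_diff _ (fun K L => \sum_(p3 < L1.+1) \sum_(q1 < L1.+1) \sum_(q2 < L1.+1)
     (q1 + q2 <= L2)%N%:R * ((p3 + (L2 - q1) < K) && (p3 + (L2 - q2) < L))%N%:R)); last first.
  by move=> K L le_K le_L; apply: coef_at_lhs => //; lia.
rewrite mixed_diff_sum; under eq_bigr => p3 _ do rewrite mixed_diff_sum.
under eq_bigr => p3 _ do under eq_bigr => q1 _ do rewrite mixed_diff_sum.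
by under eq_bigr => p3 _ do under eq_bigr => q1 _ do under eq_bigr => q2 _ do
  rewrite mixed_diff_indicator.
Qed.

(* Given p3, the two equations force q1 = p3 + L2 - K0 and q2 = p3 + L2 - L0, and
   then q1 + q2 <= L2 reads 2 p3 <= K0 + L0 - L2. *)
Lemma sum_p3_q1_q2_indicator L1 L2 K0 L0 :
  (K0 <= L2)%N -> (L0 <= L2)%N -> (K0 + L0 <= L1)%N ->
  \sum_(p3 < L1.+1) \sum_(q1 < L1.+1) \sum_(q2 < L1.+1)
     (q1 + q2 <= L2)%N%:R * ((p3 + (L2 - q1) == K0) && (p3 + (L2 - q2) == L0))%N%:R
  = (if (L2 <= K0 + L0)%N then ((K0 + L0 - L2) %/ 2).+1 else 0%N)%:R :> int.
Proof.
move=> le_K0 le_L0 le_KL0.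
have termE (p3 q1 q2 : nat) :
    (q1 + q2 <= L2)%N%:R * ((p3 + (L2 - q1) == K0) && (p3 + (L2 - q2) == L0))%N%:R =
    ((q2 == p3 + L2 - L0) && ((q1 == p3 + L2 - K0) && (2 * p3 + L2 <= K0 + L0)))%N%:R :> int.
  rewrite -natrM mulnb; congr (_%:R); congr (nat_of_bool _); apply/idP/idP.
  - case/andP => ? /andP[/eqP ? /eqP ?].
    by apply/andP; split; [|apply/andP; split]; try apply/eqP; lia.
  - case/andP => /eqP ? /andP[/eqP ? ?].
    by apply/andP; split; [|apply/andP; split]; try apply/eqP; lia.
under eq_bigr => p3 _ do under eq_bigr => q1 _ do under eq_bigr => q2 _ do rewrite termE.
under eq_bigr => p3 _ do under eq_bigr => q1 _ do rewrite sum_ord_eq_andb andbCA.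
under eq_bigr => p3 _ do rewrite sum_ord_eq_andb.
rewrite (eq_bigr (fun p3 : 'I_L1.+1 =>
  ((p3 < if (L2 <= K0 + L0)%N then ((K0 + L0 - L2) %/ 2).+1 else 0%N)%N)%:R)).
  by rewrite sum_ord_ltn //; case: ifP; lia.
by move=> p3 _; congr (_%:R); have := ltn_ord p3; case: ifP; lia.
Qed.

(** * The partition function p_S *)

(* For m <= n, x1 = n - x3 - x4 and x2 = m - x3 - 2 x4 are determined by (x3, x4). *)
Lemma pS_nat_sum n m : (m <= n)%N ->
  (pS_nat n m)%:R = \sum_(x3 < m.+1) \sum_(x4 < m.+1) (x3 + 2 * x4 <= m)%N%:R :> int.
Proof.
move=> le_mn; rewrite /pS_nat -sum1_card natr_sum big_mkcond /=.
rewrite (eq_bigr (fun x : 'I_(n + m).+1 * 'I_(n + m).+1 * 'I_(n + m).+1 * 'I_(n + m).+1 =>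
  ((x.1.1.1 + x.1.2 + x.2 == n) && (x.1.1.2 + x.1.2 + 2 * x.2 == m))%N%:R)); last first.
  by move=> x _; rewrite inE; case: ifP.
rewrite !sum_pairE /=.
under eq_bigr => x1 _ do rewrite exchange_big.
under eq_bigr => x1 _ do under eq_bigr => x3 _ do rewrite exchange_big.
rewrite exchange_big /=.
under eq_bigr => x3 _ do rewrite exchange_big.
rewrite (eq_bigr (fun x3 : 'I_(n + m).+1 => \sum_(x4 < (n + m).+1) \sum_(x1 < (n + m).+1)
   \sum_(x2 < (n + m).+1) ((x2 == m - x3 - 2 * x4 :> nat) &&
     ((x1 == n - x3 - x4 :> nat) && (x3 + 2 * x4 <= m)))%N%:R)); last first.
  move=> x3 _; apply: eq_bigr => x4 _; apply: eq_bigr => x1 _; apply: eq_bigr => x2 _.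
  congr (_%:R); congr (nat_of_bool _); apply/idP/idP.
  - case/andP => /eqP ? /eqP ?.
    by apply/andP; split; [|apply/andP; split]; try apply/eqP; lia.
  - by case/andP => /eqP ? /andP[/eqP ? ?]; apply/andP; split; apply/eqP; lia.
under eq_bigr => x3 _ do under eq_bigr => x4 _ do under eq_bigr => x1 _ do
  rewrite sum_ord_eq_andb andbCA.
under eq_bigr => x3 _ do under eq_bigr => x4 _ do rewrite sum_ord_eq_andb.
rewrite (eq_bigr (fun x3 : 'I_(n + m).+1 => \sum_(x4 < (n + m).+1)
   (x3 + 2 * x4 <= m)%N%:R)); last first.
  move=> x3 _; apply: eq_bigr => x4 _; congr (_%:R); congr (nat_of_bool _).
  by have := ltn_ord x3; have := ltn_ord x4; case: (x3 + 2 * x4 <= m)%N; lia.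
rewrite (@sum_ord_shrink _ m.+1 (fun x3 => \sum_(x4 < (n + m).+1)
   (x3 + 2 * x4 <= m)%N%:R)); [|lia|]; last first.
  by move=> i le_mi; apply: big1 => x4 _; case: leqP => //; lia.
apply: eq_bigr => x3 _.
rewrite (@sum_ord_shrink _ m.+1 (fun x4 => (x3 + 2 * x4 <= m)%N%:R)) //; first lia.
by move=> i le_mi; case: leqP => //; lia.
Qed.

Lemma pS_nat0 n : (pS_nat n 0)%:R = 1 :> int.
Proof. by rewrite pS_nat_sum // !big_ord1. Qed.

(* The increment counts the pairs with x3 + 2 x4 = m + 1, i.e. the choices of x4. *)
Lemma pS_natS n m : (m.+1 <= n)%N ->
  (pS_nat n m.+1)%:R - (pS_nat n m)%:R = (m.+1./2.+1)%:R :> int.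
Proof.
move=> lt_mn; rewrite !pS_nat_sum //; last by lia.
rewrite -[X in _ - X](@sum_ord_shrink m.+2 m.+1 (fun x3 =>
   \sum_(x4 < m.+1) (x3 + 2 * x4 <= m)%N%:R)); [|lia|]; last first.
  by move=> i le_mi; apply: big1 => x4 _; case: leqP => //; lia.
rewrite -sumrB.
rewrite (eq_bigr (fun x3 : 'I_m.+2 => \sum_(x4 < m.+2) (x3 + 2 * x4 == m.+1)%N%:R)); last first.
  move=> x3 _.
  rewrite -[X in _ - X](@sum_ord_shrink m.+2 m.+1 (fun x4 =>
    (x3 + 2 * x4 <= m)%N%:R)); [|lia|]; last by move=> i le_mi; case: leqP => //; lia.
  by rewrite -sumrB; apply: eq_bigr => x4 _; rewrite !natz; lia.
rewrite exchange_big /=.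
rewrite (eq_bigr (fun x4 : 'I_m.+2 => \sum_(x3 < m.+2)
   ((x3 == m.+1 - 2 * x4 :> nat) && (2 * x4 <= m.+1))%N%:R)); last first.
  move=> x4 _; apply: eq_bigr => x3 _; congr (_%:R); congr (nat_of_bool _).
  by apply/eqP/andP => [? | [/eqP ? ?]]; [split; [apply/eqP|] |]; lia.
under eq_bigr => x4 _ do rewrite sum_ord_eq_andb.
rewrite (eq_bigr (fun x4 : 'I_m.+2 => (x4 < m.+1./2.+1)%N%:R)).
  by rewrite sum_ord_ltn //; rewrite -divn2; lia.
move=> x4 _; congr (_%:R); congr (nat_of_bool _); rewrite -divn2.
by apply/andP/idP => [[_ ?] | ?]; [|split]; lia.
Qed.

Lemma pS_diff (n : nat) (l : int) : l <= n%:Z ->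
  (pS n l)%:Z - (pS n (l - 1))%:Z = if 0 <= l then ((absz l)./2.+1)%:Z else 0.
Proof.
case: l => [[|m] | k] le_ln.
- have -> : pS n (Posz 0 - 1) = 0%N by [].
  by rewrite /= -natz pS_nat0.
- rewrite (_ : Posz m.+1 - 1 = Posz m); last by lia.
  by rewrite /= -!natz pS_natS //; lia.
- by have -> : pS n (Negz k - 1) = 0%N by [].
Qed.

Local Close Scope ring_scope.

Lemma kronecker_two_row (g : seq nat -> seq nat -> seq nat -> int) (lam1 lam2 mu2 nu2 : nat) :
  kronecker_spec g -> mu2 <= lam2 -> nu2 <= lam2 -> lam2 <= lam1 -> mu2 + nu2 <= lam1 ->
  g [:: lam1 + lam2 - mu2; mu2] [:: lam1 + lam2 - nu2; nu2] [:: lam1; lam2] =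
  Posz (if lam2 <= mu2 + nu2 then (mu2 + nu2 - lam2)./2.+1 else 0).
Proof.
move=> spec le_mu le_nu le_lam le_sum.
have sorted_lam : sorted geq [:: lam1; lam2] by rewrite /= andbT.
have := spec [:: lam1; lam2] isT sorted_lam; rewrite /= addn0 => schurE.
have lt_mu : mu2 < (lam1 + lam2)./2.+1 by rewrite ltnS geq_half_double -muln2; lia.
have lt_nu : nu2 < (lam1 + lam2)./2.+1 by rewrite ltnS geq_half_double -muln2; lia.
pose F (k l : 'I_((lam1 + lam2)./2.+1)) := g [:: lam1 + lam2 - k; nat_of_ord k]
  [:: lam1 + lam2 - l; nat_of_ord l] [:: lam1; lam2].
have := mixed_diff_rhs F (Ordinal lt_mu) (Ordinal lt_nu); rewrite /F /= -schurE.
rewrite mixed_diff_schur4_xys // sum_p3_q1_q2_indicator //; try lia.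
by rewrite divn2 natz => <-.
Qed.

Unset Implicit Arguments.

Theorem proposition3p7 (lam2 mu2 nu2 : nat)
  (g : seq nat -> seq nat -> seq nat -> int) :
  kronecker_spec g ->
  mu2 <= lam2 -> nu2 <= mu2 ->
  let gl := fun lam1 : nat =>
    g [:: (lam1 + lam2 - mu2)%N; mu2] [:: (lam1 + lam2 - nu2)%N; nu2]
      [:: lam1; lam2] in
  let l : int := (Posz nu2 + Posz mu2 - Posz lam2)%R in
  let stable : int :=
    (Posz (pS (Posz nu2) l) - Posz (pS (Posz nu2) (l - 1)%R))%R in
  (forall lam1 lam1' : nat, lam2 <= lam1 -> lam2 <= lam1' ->
     mu2 + nu2 <= lam1 -> mu2 + nu2 <= lam1' -> gl lam1 = gl lam1') /\
  (forall lam1 : nat, lam2 <= lam1 -> mu2 + nu2 <= lam1 -> gl lam1 = stable) /\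
  stable = (if (0 <= l)%R then Posz (absz l)./2.+1 else Posz 0).
Proof.
move=> spec le_mu le_nu gl l stable.
have stableE : stable = (if (0 <= l)%R then Posz (absz l)./2.+1 else Posz 0).
  by apply: pS_diff; rewrite /l; lia.
have lE : (if (0 <= l)%R then Posz (absz l)./2.+1 else Posz 0) =
          Posz (if lam2 <= mu2 + nu2 then (mu2 + nu2 - lam2)./2.+1 else 0).
  rewrite /l; case: leqP => le_lam.
  - by rewrite (_ : (_ + _ - _)%R = Posz (mu2 + nu2 - lam2)) ?ifT //; lia.
  - by rewrite ifF //; apply/negbTE; rewrite -ltNge; lia.
have glE lam1 : lam2 <= lam1 -> mu2 + nu2 <= lam1 -> gl lam1 = stable.
  by move=> ? ?; rewrite stableE lE /gl kronecker_two_row //; lia.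
split; [|split] => //.
by move=> lam1 lam1' *; rewrite !glE.
Qed.
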